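(* Let $\alpha:\Sigma^\Delta\to(H_1,V_1)$ and $\beta:\Sigma^\Delta\to(H_2,V_2)$ be surjective morphisms onto finite forest algebras, and suppose the derived forest category $C=D_{\alpha,\beta}$ is locally distributive. Then $C$ divides some finite distributive forest algebra.
   Context: Forest algebras $(H,V)$: $H$ is an additive monoid, $V$ is a monoid acting faithfully on $H$, there are insertion elements $I_h\in V$ with $I_h h'=h+h'$, and every $h$ is of the form $v\cdot 0$. All forest algebras are horizontally commutative and idempotent. We write $h+v$ for $I_h v$. $\Sigma^\Delta=(H_\Sigma,V_\Sigma)$ is the free forest algebra over the finite alphabet $\Sigma$: forests are finite sets of unordered trees, and contexts are forests with one leaf replaced by a hole. $(H,V)$ is distributive if $v(h_1+h_2)=vh_1+vh_2$. Derived forest category $D_{\alpha,\beta}$. Its objects are the elements of $H_2$. For $h,h'\in H_2$, the arrows from $h$ to $h'$ are equivalence classes $[h,p,h']$ of triples with $p\in V_\Sigma$ and $\beta(p)h=h'$, where $(h,p,h')\sim(h,q,h')$ iff $\alpha(ps)=\alpha(qs)$ for all $s\in H_\Sigma$ with $\beta(s)=h$. Composition is $[h_2,p,h_3]\cdot[h_1,q,h_2]=[h_1,pq,h_3]$, with identities $[h,1,h]$. Half-arrows ending at $h$ are pairs $(\alpha(s),h)$ with $s\in H_\Sigma$ and $\beta(s)=h$. Sums of half-arrows are taken componentwise. The action of an arrow on a half-arrow is $[h,p,h']\cdot(h_1,h)=(\alpha(p)h_1,h')$. The sum of an arrow and a half-arrow is $[h,p,h']+(\alpha(s),\beta(s))=[h,\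 p+s,\ h'+\beta(s)]$, where $p+s$ is the context $p$ with the forest $s$ added at top level; sums in the other order are analogous. $C$ is locally distributive if for every object $h$, all half-arrows $x_1,x_2$ ending at $h$, and every arrow $v$ from $h$ to some $h'$, we have $v\cdot(x_1+x_2)=v\cdot x_1+v\cdot x_2$. $C$ divides a forest algebra $(H,V)$ if there exist a nonempty set $K_x\subseteq H$ for each half-arrow $x$ and a nonempty set $K_e\subseteq V$ for each arrow $e$ satisfying the following conditions. Preservation of operations: - $K_fK_e\subseteq K_{fe}$ for composable arrows; - $K_eK_x\subseteq K_{e\cdot x}$ when the arrow $e$ starts at the endpoint of the half-arrow $x$; - $K_x+K_y\subseteq K_{x+y}$; - $K_x+K_f\subseteq K_{x+f}$ and $K_f+K_x\subseteq K_{f+x}$ for half-arrows $x,y$ and arrows $f$. Injectivity: - distinct arrows with the same source and target have disjoint sets; - distinct half-arrows with the same end object have disjoint sets. *)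

From mathcomp Require Import all_boot.
Set Implicit Arguments. Unset Strict Implicit. Unset Printing Implicit Defensive.

Record fa_ops := FAOps {
  faH : finType;
  faV : finType;
  fa_add : faH -> faH -> faH;
  fa_zero : faH;
  fa_mul : faV -> faV -> faV;
  fa_one : faV;
  fa_act : faV -> faH -> faH;
  fa_ins : faH -> faV
}.

Definition is_forest_algebra (A : fa_ops) : Prop :=
  (forall x y z : faH A, fa_add x (fa_add y z) = fa_add (fa_add x y) z) /\
  (forall x y : faH A, fa_add x y = fa_add y x) /\
  (forall x, fa_add (fa_zero A) x = x) /\
  (forall x : faH A, fa_add x x = x) /\
  (forall u v w : faV A, fa_mul u (fa_mul v w) = fa_mul (fa_mul u v) w) /\
  (forall v, fa_mul (fa_one A) v = v /\ fa_mul v (fa_one A) = v) /\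
  (forall h, fa_act (fa_one A) h = h) /\
  (forall (v w : faV A) (h : faH A), fa_act (fa_mul v w) h = fa_act v (fa_act w h)) /\
  (forall v w : faV A, (forall h, fa_act v h = fa_act w h) -> v = w) /\
  (forall h h' : faH A, fa_act (fa_ins h) h' = fa_add h h') /\
  (forall h, exists v, fa_act v (fa_zero A) = h).

Definition fa_distributive (A : fa_ops) : Prop :=
  forall (v : faV A) (h1 h2 : faH A),
    fa_act v (fa_add h1 h2) = fa_add (fa_act v h1) (fa_act v h2).

(* h + v := I_h v  (and, by horizontal commutativity, v + h is the same) *)
Definition fa_hplusv (A : fa_ops) (h : faH A) (v : faV A) : faV A :=
  fa_mul (fa_ins h) v.

(* The free forest algebra Sigma^Delta, presented by syntax.            *)
Inductive tree (S : Type) := Node of S & seq (tree S).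
Definition forest (S : Type) := seq (tree S).

(* CHole l r     =  l + [] + r
   CNode l a c r =  l + a(c) + r *)
Inductive ctx (S : Type) :=
  | CHole of forest S & forest S
  | CNode of forest S & S & ctx S & forest S.

Arguments CHole {S}.
Arguments CNode {S}.

Definition ctx_one (S : Type) : ctx S := CHole [::] [::].

Fixpoint fill (S : Type) (c : ctx S) (f : forest S) : forest S :=
  match c with
  | CHole l r => l ++ f ++ r
  | CNode l a c' r => l ++ Node a (fill c' f) :: r
  end.

Definition ctx_side (S : Type) (l : forest S) (d : ctx S) (r : forest S) : ctx S :=
  match d with
  | CHole l' r' => CHole (l ++ l') (r' ++ r)
  | CNode l' a c r' => CNode (l ++ l') a c (r' ++ r)
  end.

Fixpoint ctx_comp (S : Type) (c d : ctx S) : ctx S :=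
  match c with
  | CHole l r => ctx_side l d r
  | CNode l a c' r => CNode l a (ctx_comp c' d) r
  end.

Definition ctx_plus_forest (S : Type) (p : ctx S) (s : forest S) := ctx_side [::] p s.
Definition forest_plus_ctx (S : Type) (s : forest S) (p : ctx S) := ctx_side s p [::].

Record fmorph (S : Type) (A : fa_ops) := FMorph {
  mH : forest S -> faH A;
  mV : ctx S -> faV A
}.

Definition is_morphism (S : Type) (A : fa_ops) (m : fmorph S A) : Prop :=
  [/\ mH m [::] = fa_zero A,
      (forall f g, mH m (f ++ g) = fa_add (mH m f) (mH m g)),
      mV m (ctx_one S) = fa_one A,
      (forall c d, mV m (ctx_comp c d) = fa_mul (mV m c) (mV m d)) &
      (forall c f, mH m (fill c f) = fa_act (mV m c) (mH m f))].

Definition is_surjective_morphism (S : Type) (A : fa_ops) (m : fmorph S A) : Prop :=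
  [/\ is_morphism m,
      (forall h : faH A, exists s, mH m s = h) &
      (forall v : faV A, exists p, mV m p = v)].

(* An arrow [h,p,h'] is represented by a triple (h,p,h') with            *)
(* beta(p) h = h'; triples are identified up to [arrow_equiv].           *)
(* A half-arrow ending at h is a pair (alpha(s), h) with beta(s) = h.    *)
Section Derived.
Variables (S : Type) (A1 A2 : fa_ops) (al : fmorph S A1) (be : fmorph S A2).

Definition is_arrow (h : faH A2) (p : ctx S) (h' : faH A2) : Prop :=
  fa_act (mV be p) h = h'.

Definition arrow_equiv (h : faH A2) (p q : ctx S) : Prop :=
  forall s, mH be s = h -> mH al (fill p s) = mH al (fill q s).

Definition is_half_arrow (x : faH A1 * faH A2) : Prop :=
  exists s, mH al s = x.1 /\ mH be s = x.2.

Definition half_sum (x y : faH A1 * faH A2) : faH A1 * faH A2 :=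
  (fa_add x.1 y.1, fa_add x.2 y.2).

Definition arrow_act (p : ctx S) (h' : faH A2) (x : faH A1 * faH A2)
  : faH A1 * faH A2 := (fa_act (mV al p) x.1, h').

Definition locally_distributive : Prop :=
  forall (h h' : faH A2) (p : ctx S), is_arrow h p h' ->
  forall x1 x2, is_half_arrow x1 -> is_half_arrow x2 -> x1.2 = h -> x2.2 = h ->
    arrow_act p h' (half_sum x1 x2) = half_sum (arrow_act p h' x1) (arrow_act p h' x2).

Definition divides (B : fa_ops) : Prop :=
  exists (KH : faH A1 * faH A2 -> {set faH B})
         (KV : faH A2 -> ctx S -> faH A2 -> {set faV B}),
  (
   (forall x, is_half_arrow x -> KH x != set0) /\
   (forall h p h', is_arrow h p h' -> KV h p h' != set0) /\
   (* K_e depends only on the arrow (the equivalence class) *)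
   (forall h p q h', is_arrow h p h' -> is_arrow h q h' ->
      arrow_equiv h p q -> KV h p h' = KV h q h') /\
   (forall h1 h2 h3 p q, is_arrow h2 p h3 -> is_arrow h1 q h2 ->
      forall v w, v \in KV h2 p h3 -> w \in KV h1 q h2 ->
        fa_mul v w \in KV h1 (ctx_comp p q) h3) /\
   (forall h p h' x, is_arrow h p h' -> is_half_arrow x -> x.2 = h ->
      forall v k, v \in KV h p h' -> k \in KH x ->
        fa_act v k \in KH (arrow_act p h' x)) /\
   (forall x y, is_half_arrow x -> is_half_arrow y ->
      forall k l, k \in KH x -> l \in KH y -> fa_add k l \in KH (half_sum x y)) /\
   (forall s h p h', is_arrow h p h' ->
      forall k v, k \in KH (mH al s, mH be s) -> v \in KV h p h' ->
        fa_hplusv k v \in KV h (forest_plus_ctx s p) (fa_add (mH be s) h') /\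
        fa_hplusv k v \in KV h (ctx_plus_forest p s) (fa_add h' (mH be s))) /\
   (forall h p q h', is_arrow h p h' -> is_arrow h q h' -> ~ arrow_equiv h p q ->
      [disjoint KV h p h' & KV h q h']) /\
   (forall x y, is_half_arrow x -> is_half_arrow y -> x.2 = y.2 -> x <> y ->
      [disjoint KH x & KH y])).

End Derived.

From mathcomp Require Import all_boot.
From mathcomp Require Import boolp.
Set Implicit Arguments. Unset Strict Implicit. Unset Printing Implicit Defensive.

(* Half-arrows live in the finite join-semilattice H1 x H2 (componentwise sum).
   Such a semilattice embeds into the subsets of option (H1 x H2) under union,
   by sending x to the set of points it is not below, plus the extra point None.
   Take B to be the forest algebra of union-preserving maps on these subsets; it
   is distributive.  Label a half-arrow by its encoding and an arrow e from h by
   the maps that agree with the action of e on encodings of half-arrows ending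
   at h.  Local distributivity says that this action is a join-morphism on the
   join-closed set of half-arrows ending at h, and any such partial
   join-morphism extends to a union-preserving map, so the labels are nonempty;
   injectivity of the encoding gives the disjointness conditions. *)

Section ForestAlgebraLaws.
Variable A : fa_ops.
Hypothesis FA : is_forest_algebra A.

Lemma fa_addA (x y z : faH A) : fa_add x (fa_add y z) = fa_add (fa_add x y) z.
Proof. by case: FA => addA _; apply: addA. Qed.

Lemma fa_addC (x y : faH A) : fa_add x y = fa_add y x.
Proof. by case: FA => _ [addC _]; apply: addC. Qed.

Lemma fa_addI (x : faH A) : fa_add x x = x.
Proof. by case: FA => _ [_ [_ [addI _]]]; apply: addI. Qed.

Lemma fa_act_mul (v w : faV A) (h : faH A) :
  fa_act (fa_mul v w) h = fa_act v (fa_act w h).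
Proof. by case: FA => _ [_ [_ [_ [_ [_ [_ [actM _]]]]]]]; apply: actM. Qed.

End ForestAlgebraLaws.

Section MorphismLaws.
Variables (S : Type) (A : fa_ops) (m : fmorph S A).
Hypothesis Mm : is_morphism m.

Lemma morph_cat (f g : forest S) : mH m (f ++ g) = fa_add (mH m f) (mH m g).
Proof. by case: Mm. Qed.

Lemma morph_comp (c d : ctx S) : mV m (ctx_comp c d) = fa_mul (mV m c) (mV m d).
Proof. by case: Mm. Qed.

Lemma morph_fill (c : ctx S) (f : forest S) :
  mH m (fill c f) = fa_act (mV m c) (mH m f).
Proof. by case: Mm. Qed.

End MorphismLaws.

Lemma fill_forest_plus_ctx (S : Type) (s : forest S) (p : ctx S) (t : forest S) :
  fill (forest_plus_ctx s p) t = s ++ fill p t.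
Proof. by case: p => [l r|l a c r] /=; rewrite ?cats0 !catA. Qed.

Lemma fill_ctx_plus_forest (S : Type) (s : forest S) (p : ctx S) (t : forest S) :
  fill (ctx_plus_forest p s) t = fill p t ++ s.
Proof. by case: p => [l r|l a c r] /=; rewrite -!catA. Qed.

Section UnionForestAlgebra.
Variable T : finType.

(* Only binary unions: the insertion maps a |-> h :|: a do not fix set0. *)
Definition union_morph (f : {ffun {set T} -> {set T}}) : bool :=
  [forall a, forall b, f (a :|: b) == f a :|: f b].

Lemma union_morphP (f : {ffun {set T} -> {set T}}) :
  reflect (forall a b, f (a :|: b) = f a :|: f b) (union_morph f).
Proof.
apply: (iffP forallP) => [H a b | H a]; first exact/eqP/(forallP (H a) b).
by apply/forallP => b; apply/eqP/H.
Qed.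

Definition umap := {f : {ffun {set T} -> {set T}} | union_morph f}.

Definition umap_app (v : umap) (a : {set T}) : {set T} := val v a.

Lemma umap_appU (v : umap) (a b : {set T}) :
  umap_app v (a :|: b) = umap_app v a :|: umap_app v b.
Proof. exact: (union_morphP _ (valP v)). Qed.

Lemma umap_inj (v w : umap) : umap_app v =1 umap_app w -> v = w.
Proof. by move=> vw; apply: val_inj; apply/ffunP. Qed.

Section UmapOf.
Variables (f : {set T} -> {set T}) (fU : forall a b, f (a :|: b) = f a :|: f b).

Lemma union_morph_ffun : union_morph [ffun a => f a].
Proof. by apply/union_morphP => a b; rewrite !ffunE. Qed.

Definition umap_of : umap := exist union_morph _ union_morph_ffun.

Lemma umap_ofE a : umap_app umap_of a = f a.
Proof. by rewrite /umap_app ffunE. Qed.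

End UmapOf.

Lemma umap_compU (v w : umap) (a b : {set T}) :
  umap_app v (umap_app w (a :|: b))
  = umap_app v (umap_app w a) :|: umap_app v (umap_app w b).
Proof. by rewrite !umap_appU. Qed.

Definition umap_mul (v w : umap) : umap := umap_of (umap_compU v w).

Definition umap_one : umap := @umap_of id (fun a b => erefl).

Definition umap_ins (h : {set T}) : umap := umap_of (setUUr h).

Definition bigcup_umap (g : T -> {set T}) : umap :=
  umap_of (fun a b => bigcup_setU a b g).

Definition union_fa : fa_ops :=
  @FAOps {set T} umap (@setU T) set0 umap_mul umap_one umap_app umap_ins.

Lemma union_fa_forest_algebra : is_forest_algebra union_fa.
Proof.
rewrite /is_forest_algebra; repeat match goal with |- _ /\ _ => split end.
- exact: setUA.
- exact: setUC.
- exact: set0U.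
- exact: setUid.
- by move=> u v w; apply: umap_inj => a; rewrite /= !umap_ofE.
- by move=> v; split; apply: umap_inj => a; rewrite /= !umap_ofE.
- by move=> h; rewrite /= umap_ofE.
- by move=> v w h; rewrite /= umap_ofE.
- exact: umap_inj.
- by move=> h h'; rewrite /= umap_ofE.
- by move=> h; exists (umap_ins h); rewrite /= umap_ofE setU0.
Qed.

Lemma union_fa_distributive : fa_distributive union_fa.
Proof. exact: umap_appU. Qed.

Lemma union_fa_hplusvE (k : {set T}) (v : umap) (a : {set T}) :
  umap_app (fa_hplusv (A := union_fa) k v) a = k :|: umap_app v a.
Proof. by rewrite /= !umap_ofE. Qed.

End UnionForestAlgebra.

Section JoinSemilatticeEncoding.
Variables (X : finType) (join : X -> X -> X).
Hypotheses (joinA : associative join) (joinC : commutative join) (joinI : idempotent_op join).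

Definition below (x z : X) : bool := join x z == z.

Lemma below_refl x : below x x.
Proof. by rewrite /below joinI. Qed.

Lemma below_joinr x y : below x (join x y).
Proof. by rewrite /below joinA joinI. Qed.

Lemma below_joinl x y : below x (join y x).
Proof. by rewrite joinC below_joinr. Qed.

Lemma below_trans x y z : below x y -> below y z -> below x z.
Proof. by move=> /eqP xy /eqP yz; apply/eqP; rewrite -yz joinA xy. Qed.

Lemma below_join x y z : below (join x y) z = below x z && below y z.
Proof.
apply/idP/andP => [xyz | [/eqP xz /eqP yz]].
  by split; apply: below_trans xyz; [apply: below_joinr | apply: below_joinl].
by apply/eqP; rewrite -joinA yz xz.
Qed.

Lemma below_antisym x y : below x y -> below y x -> x = y.
Proof. by move=> /eqP xy /eqP yx; rewrite -xy joinC yx. Qed.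

Lemma join_closed_max (U : pred X) (u0 : X) : U u0 ->
  (forall x y, U x -> U y -> U (join x y)) ->
  exists2 u, U u & forall x, U x -> below x u.
Proof.
move=> Uu0 Ujoin; exists (foldr join u0 (enum U)).
  have : {subset enum U <= U} by move=> x; rewrite mem_enum.
  elim: (enum U) => //= x s IHs sU; apply: Ujoin; first exact/sU/mem_head.
  by apply: IHs => y ys; apply: sU; rewrite inE ys orbT.
move=> x Ux; have : x \in enum U by rewrite mem_enum.
elim: (enum U) => //= y s IHs.
rewrite inE => /predU1P [-> | /IHs xs]; first exact: below_joinr.
exact: below_trans xs (below_joinl _ _).
Qed.

(* [None] lies in every encoding, so that a union-preserving extension can send
   it to what all the target encodings have in common. *)
Definition enc (x : X) : {set option X} :=
  [set z | if z is Some z' then ~~ below x z' else true].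

Lemma in_enc x z : (Some z \in enc x) = ~~ below x z.
Proof. by rewrite inE. Qed.

Lemma None_in_enc x : None \in enc x.
Proof. by rewrite inE. Qed.

Lemma encU x y : enc (join x y) = enc x :|: enc y.
Proof. by apply/setP => -[z|]; rewrite !inE ?below_join ?negb_and. Qed.

Lemma enc_inj : injective enc.
Proof.
move=> x y exy; apply: below_antisym.
  by move: (below_refl y); apply: contraTT; rewrite -in_enc exy in_enc.
by move: (below_refl x); apply: contraTT; rewrite -in_enc -exy in_enc.
Qed.

Lemma enc_extend (P : X -> Prop) (psi : X -> X) :
  (forall x y, P x -> P y -> P (join x y)) ->
  (forall x y, P x -> P y -> psi (join x y) = join (psi x) (psi y)) ->
  exists g : option X -> {set option X},
    forall x, P x -> \bigcup_(z in enc x) g z = enc (psi x).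
Proof.
move=> Pjoin psiU.
(* Take g z as large as allowed; the inclusion into enc (psi x) is then free,
   and a point Some w of enc (psi x) is reached from Some u, for u the largest
   element of P with psi u below w (or from None if there is none). *)
exists (fun z => [set w | `[< forall x, P x -> z \in enc x -> w \in enc (psi x) >]]).
move=> x Px; apply/setP => w; apply/bigcupP/idP => [[z zx] | wx].
  by rewrite inE => /asboolP; apply.
case: w wx => [w | _]; last first.
  by exists None; rewrite ?None_in_enc // inE; apply/asboolP => *; apply: None_in_enc.
rewrite in_enc => psix_w.
pose U u := `[< P u >] && below (psi u) w.
have Ujoin x1 x2 : U x1 -> U x2 -> U (join x1 x2).
  move=> /andP [/asboolP Px1 x1w] /andP [/asboolP Px2 x2w].
  by rewrite /U psiU // below_join x1w x2w asboolT //; apply: Pjoin.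
have [u0 Uu0 | noU] := pickP U; last first.
  exists None; rewrite ?None_in_enc // inE; apply/asboolP => x' Px' _.
  by rewrite in_enc; have := noU x'; rewrite /U (asboolT Px') => /= ->.
have [u /andP [/asboolP Pu uw] umax] := join_closed_max Uu0 Ujoin.
exists (Some u).
  rewrite in_enc; apply: contra psix_w => xu; apply: below_trans uw.
  by rewrite /below -psiU // (eqP xu).
rewrite inE; apply/asboolP => x' Px'; rewrite !in_enc; apply: contra => x'w.
by apply: umax; rewrite /U x'w asboolT.
Qed.

End JoinSemilatticeEncoding.

Section DerivedCategoryDivision.
Variables (Sigma : Type) (A1 A2 : fa_ops).
Variables (alpha : fmorph Sigma A1) (beta : fmorph Sigma A2).
Hypotheses (FA1 : is_forest_algebra A1) (FA2 : is_forest_algebra A2).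
Hypotheses (Malpha : is_morphism alpha) (Mbeta : is_morphism beta).
Hypothesis LD : locally_distributive alpha beta.

Local Notation half := (faH A1 * faH A2)%type.
Local Notation is_half := (is_half_arrow alpha beta).
Local Notation act := (@arrow_act Sigma A1 A2 alpha).
Local Notation hsum := (@half_sum A1 A2).

Lemma half_sumA : associative hsum.
Proof. by move=> [? ?] [? ?] [? ?]; rewrite /half_sum /= !fa_addA. Qed.

Lemma half_sumC : commutative hsum.
Proof. by move=> [? ?] [? ?]; congr pair; apply: fa_addC. Qed.

Lemma half_sumI : idempotent_op hsum.
Proof. by move=> [? ?]; rewrite /half_sum /= !fa_addI. Qed.

Local Notation enc := (enc hsum).

Lemma enc_half_sum x y : enc (hsum x y) = enc x :|: enc y.
Proof. exact: encU half_sumA half_sumC half_sumI x y. Qed.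

Lemma is_half_sum x y : is_half x -> is_half y -> is_half (hsum x y).
Proof.
move=> [s [sx1 sx2]] [t [ty1 ty2]]; exists (s ++ t).
by rewrite /= !morph_cat // sx1 sx2 ty1 ty2.
Qed.

Lemma is_half_act h p h' x :
  is_arrow beta h p h' -> is_half x -> x.2 = h -> is_half (act p h' x).
Proof.
move=> php' [s [sx1 sx2]] xh; exists (fill p s).
by rewrite /= !morph_fill // sx1 sx2 xh.
Qed.

Lemma arrow_act_comp h2 p h3 q x :
  act p h3 (act q h2 x) = act (ctx_comp p q) h3 x.
Proof. by rewrite /arrow_act /= morph_comp // fa_act_mul. Qed.

Lemma arrow_act_equiv h p q h' x : arrow_equiv alpha beta h p q ->
  is_half x -> x.2 = h -> act p h' x = act q h' x.
Proof.
move=> pq [s [sx1 sx2]] xh.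
by rewrite /arrow_act -sx1 -!morph_fill // pq // sx2 xh.
Qed.

Lemma arrow_act_forest_plus_ctx s p h' x : is_half x ->
  act (forest_plus_ctx s p) (fa_add (mH beta s) h') x
  = hsum (mH alpha s, mH beta s) (act p h' x).
Proof.
move=> [t [tx1 _]].
by rewrite /arrow_act /half_sum /= -tx1 -!morph_fill // fill_forest_plus_ctx morph_cat.
Qed.

Lemma arrow_act_ctx_plus_forest s p h' x : is_half x ->
  act (ctx_plus_forest p s) (fa_add h' (mH beta s)) x
  = hsum (act p h' x) (mH alpha s, mH beta s).
Proof.
move=> [t [tx1 _]].
by rewrite /arrow_act /half_sum /= -tx1 -!morph_fill // fill_ctx_plus_forest morph_cat.
Qed.

Local Notation B := (union_fa (option half)).

Definition Khalf (x : half) : {set faH B} := [set enc x].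

Definition Karrow (h : faH A2) (p : ctx Sigma) (h' : faH A2) : {set faV B} :=
  [set f | `[< forall x, is_half x -> x.2 = h -> umap_app f (enc x) = enc (act p h' x) >]].

Lemma KarrowP h p h' f : reflect
  (forall x, is_half x -> x.2 = h -> umap_app f (enc x) = enc (act p h' x))
  (f \in Karrow h p h').
Proof. by rewrite inE; apply: asboolP. Qed.

Lemma Khalf_neq0 x : Khalf x != set0.
Proof. by apply/set0Pn; exists (enc x); rewrite inE. Qed.

Lemma Karrow_neq0 h p h' : is_arrow beta h p h' -> Karrow h p h' != set0.
Proof.
move=> php'.
pose P x := is_half x /\ x.2 = h.
have Psum x y : P x -> P y -> P (hsum x y).
  move=> [hx xh] [hy yh]; split; first exact: is_half_sum.
  by rewrite /= xh yh fa_addI.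
have actU x y : P x -> P y -> act p h' (hsum x y) = hsum (act p h' x) (act p h' y).
  by move=> [hx xh] [hy yh]; apply: (LD php').
have [g gE] := enc_extend half_sumA half_sumC half_sumI Psum actU.
apply/set0Pn; exists (bigcup_umap g); apply/KarrowP => x hx xh.
by rewrite umap_ofE gE.
Qed.

Lemma Karrow_equiv h p q h' :
  arrow_equiv alpha beta h p q -> Karrow h p h' = Karrow h q h'.
Proof.
move=> pq; apply/setP => f.
by apply/KarrowP/KarrowP => fE x hx xh; rewrite fE // (arrow_act_equiv h' pq).
Qed.

Lemma Karrow_comp h1 h2 h3 p q v w : is_arrow beta h1 q h2 ->
  v \in Karrow h2 p h3 -> w \in Karrow h1 q h2 ->
  fa_mul v w \in Karrow h1 (ctx_comp p q) h3.
Proof.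
move=> qh /KarrowP vE /KarrowP wE; apply/KarrowP => x hx xh.
by rewrite umap_ofE wE // vE ?arrow_act_comp //; apply: is_half_act qh hx xh.
Qed.

Lemma Karrow_act h p h' x v k : is_half x -> x.2 = h ->
  v \in Karrow h p h' -> k \in Khalf x -> fa_act v k \in Khalf (act p h' x).
Proof. by move=> hx xh /KarrowP vE; rewrite !inE => /eqP ->; rewrite /= vE. Qed.

Lemma Khalf_sum x y k l :
  k \in Khalf x -> l \in Khalf y -> fa_add k l \in Khalf (hsum x y).
Proof. by rewrite !inE => /eqP -> /eqP ->; rewrite enc_half_sum. Qed.

Lemma Karrow_forest_plus_ctx s h p h' k v :
  k \in Khalf (mH alpha s, mH beta s) -> v \in Karrow h p h' ->
  fa_hplusv k v \in Karrow h (forest_plus_ctx s p) (fa_add (mH beta s) h').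
Proof.
rewrite inE => /eqP -> /KarrowP vE; apply/KarrowP => x hx xh.
by rewrite union_fa_hplusvE vE // arrow_act_forest_plus_ctx // enc_half_sum.
Qed.

Lemma Karrow_ctx_plus_forest s h p h' k v :
  k \in Khalf (mH alpha s, mH beta s) -> v \in Karrow h p h' ->
  fa_hplusv k v \in Karrow h (ctx_plus_forest p s) (fa_add h' (mH beta s)).
Proof.
rewrite inE => /eqP -> /KarrowP vE; apply/KarrowP => x hx xh.
by rewrite union_fa_hplusvE vE // arrow_act_ctx_plus_forest // enc_half_sum setUC.
Qed.

Lemma Karrow_disjoint h p q h' : ~ arrow_equiv alpha beta h p q ->
  [disjoint Karrow h p h' & Karrow h q h'].
Proof.
move=> not_pq; apply/pred0P => f /=; apply/negP => /andP [/KarrowP pE /KarrowP qE].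
apply: not_pq => s sh; have hs : is_half (mH alpha s, mH beta s) by exists s.
have := pE _ hs sh; rewrite qE // => /(enc_inj half_sumC half_sumI) [].
by rewrite !morph_fill.
Qed.

Lemma Khalf_disjoint x y : x <> y -> [disjoint Khalf x & Khalf y].
Proof.
move=> xy; rewrite disjoints1 inE.
by apply/eqP => /(enc_inj half_sumC half_sumI).
Qed.

Lemma derived_divides : divides alpha beta B.
Proof.
exists Khalf, Karrow.
split; first by move=> x _; apply: Khalf_neq0.
split; first by move=> h p h'; apply: Karrow_neq0.
split; first by move=> h p q h' _ _; apply: Karrow_equiv.
split; first by move=> h1 h2 h3 p q _ qh v w; apply: Karrow_comp.
split; first by move=> h p h' x _ hx xh v k; apply: (Karrow_act hx xh).
split; first by move=> x y _ _ k l; apply: Khalf_sum.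
split.
  move=> s h p h' _ k v ks vp.
  by split; [apply: Karrow_forest_plus_ctx | apply: Karrow_ctx_plus_forest].
split; first by move=> h p q h' _ _; apply: Karrow_disjoint.
by move=> x y _ _ _; apply: Khalf_disjoint.
Qed.

End DerivedCategoryDivision.

Theorem mainTheorem5 (Sigma : finType) (A1 A2 : fa_ops)
    (alpha : fmorph Sigma A1) (beta : fmorph Sigma A2) :
  is_forest_algebra A1 -> is_forest_algebra A2 ->
  is_surjective_morphism alpha -> is_surjective_morphism beta ->
  locally_distributive alpha beta ->
  exists B : fa_ops,
    is_forest_algebra B /\ fa_distributive B /\ divides alpha beta B.
Proof.
move=> FA1 FA2 [Malpha _ _] [Mbeta _ _] LD.
exists (union_fa (option (faH A1 * faH A2))).
split; first exact: union_fa_forest_algebra.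
split; first exact: union_fa_distributive.
exact: derived_divides.
Qed.
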